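(* Let $\eta\in(0,1)$ be such that for every real sequence $\{\gamma_n\}_{n\in\mathbb{Z}}$ with $|\gamma_n-n|<\eta$ for all $n$, the system $E(\{\gamma_n\})$ is a Riesz basis of $L^2[0,1]$. Then there exists $\Lambda\subseteq\mathbb{Z}$ such that $E(\Lambda)$ is a Riesz basis of $L^2[0,\eta]$.
   Context: For real $\lambda$, $e_\lambda(t)=e^{2\pi i\lambda t}$, and $E(\Lambda)=\{e_\lambda\}_{\lambda\in\Lambda}$. A Riesz basis of a Hilbert space is the image of an orthonormal basis under a bounded invertible operator. *)

From HB Require Import structures.
From mathcomp Require Import all_boot all_order all_algebra.
From mathcomp Require Import all_classical all_reals all_analysis.
From mathcomp Require Import complex.
Set Implicit Arguments. Unset Strict Implicit. Unset Printing Implicit Defensive.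
Import Order.TTheory GRing.Theory Num.Theory.
Import numFieldNormedType.Exports.
Local Open Scope classical_set_scope.
Local Open Scope ring_scope.
Local Open Scope complex_scope.

Section L2.
Variable R : realType.
Local Notation C := R[i].
Local Notation leb := (@lebesgue_measure R).

Definition itv0 (a : R) : set R := `[0, a]%classic.

Definition csq (z : C) : R := (complex.Re z) ^+ 2 + (complex.Im z) ^+ 2.

(* f (a representative of an element of) L^2[0,a], complex valued *)
Definition L2 (a : R) (f : R -> C) : Prop :=
  [/\ measurable_fun (itv0 a) (fun x => complex.Re (f x)),
      measurable_fun (itv0 a) (fun x => complex.Im (f x)) &
      (\int[leb]_(x in (itv0 a)) (csq (f x))%:E < +oo)%E].

Definition normL2 (a : R) (f : R -> C) : R :=
  Num.sqrt (Rintegral leb (itv0 a) (fun x => csq (f x))).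

(* equality in L^2[0,a] (i.e. a.e. equality on [0,a]) *)
Definition eqL2 (a : R) (f g : R -> C) : Prop :=
  normL2 a (fun x => f x - g x) = 0.

Definition innerL2 (a : R) (f g : R -> C) : C :=
  (Rintegral leb (itv0 a) (fun x => complex.Re (f x * conjc (g x))))
  +i* (Rintegral leb (itv0 a) (fun x => complex.Im (f x * conjc (g x)))).

Definition orthonormal_basis (a : R) (I : Type) (u : I -> R -> C) : Prop :=
  [/\ forall i, L2 a (u i),
      forall i j, innerL2 a (u i) (u j) = if `[< i = j >] then 1 else 0 &
      forall f, L2 a f -> (forall i, innerL2 a f (u i) = 0) -> eqL2 a f (fun=> 0)].

Definition bounded_linear_op (a : R) (T : (R -> C) -> (R -> C)) : Prop :=
  [/\ forall f, L2 a f -> L2 a (T f),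
      forall (c : C) f g, L2 a f -> L2 a g ->
        eqL2 a (T (fun x => c * f x + g x)) (fun x => c * T f x + T g x) &
      exists K : R, forall f, L2 a f -> normL2 a (T f) <= K * normL2 a f].

Definition bounded_invertible_op (a : R) (T : (R -> C) -> (R -> C)) : Prop :=
  bounded_linear_op a T /\
  exists S, [/\ bounded_linear_op a S,
     forall f, L2 a f -> eqL2 a (S (T f)) f &
     forall f, L2 a f -> eqL2 a (T (S f)) f].

Definition riesz_basis (a : R) (I : Type) (v : I -> R -> C) : Prop :=
  exists (u : I -> R -> C) (T : (R -> C) -> (R -> C)),
    [/\ orthonormal_basis a u, bounded_invertible_op a T &
        forall i, eqL2 a (T (u i)) (v i)].

(* e_lambda(t) = exp(2 pi i lambda t) *)
Definition expo (lam : R) : R -> C :=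
  fun t => (cos (2 * pi * lam * t)) +i* (sin (2 * pi * lam * t)).

End L2.

(* Put m n := floor (n / eta).  Then |eta m n - n| < eta, so by hypothesis the
   exponentials with frequencies eta m n form a Riesz basis of L^2[0,1].  The
   dilation f |-> f (. / eta) maps L^2[0,1] onto L^2[0,eta] (up to the factor
   sqrt eta it is unitary) and turns e_(eta m n) into e_(m n); conjugating by it
   the operator witnessing the Riesz basis shows that E({m n}) is a Riesz basis
   of L^2[0,eta].  As eta < 1, m is injective, so this is E(Lam) for Lam the
   range of m. *)

From HB Require Import structures.
From mathcomp Require Import all_boot all_order all_algebra.
From mathcomp Require Import all_classical all_reals all_analysis.
From mathcomp Require Import complex ring lra zify measurable_realfun.
Set Implicit Arguments. Unset Strict Implicit. Unset Printing Implicit Defensive.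
Import Order.TTheory GRing.Theory Num.Theory.
Import numFieldNormedType.Exports.
Local Open Scope classical_set_scope.
Local Open Scope ring_scope.
Local Open Scope complex_scope.

Section Dilation.
Variable R : realType.
Local Notation mu := (@lebesgue_measure R).
Local Notation C := R[i].
Local Notation Re := complex.Re.
Local Notation Im := complex.Im.

Lemma ReD (x y : C) : Re (x + y) = Re x + Re y. Proof. by case: x; case: y. Qed.
Lemma ImD (x y : C) : Im (x + y) = Im x + Im y. Proof. by case: x; case: y. Qed.
Lemma ReB (x y : C) : Re (x - y) = Re x - Re y. Proof. by case: x; case: y. Qed.
Lemma ImB (x y : C) : Im (x - y) = Im x - Im y. Proof. by case: x; case: y. Qed.
Lemma ReM (x y : C) : Re (x * y) = Re x * Re y - Im x * Im y.
Proof. by case: x; case: y. Qed.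
Lemma ImM (x y : C) : Im (x * y) = Re x * Im y + Im x * Re y.
Proof. by case: x => ? ?; case: y => ? ? /=. Qed.
Lemma Re_realM (r : R) (x : C) : Re (r%:C * x) = r * Re x.
Proof. by case: x => ? ? /=; ring. Qed.
Lemma Im_realM (r : R) (x : C) : Im (r%:C * x) = r * Im x.
Proof. by case: x => ? ? /=; ring. Qed.
Lemma Re_conj (x : C) : Re (conjc x) = Re x. Proof. by case: x. Qed.
Lemma Im_conj (x : C) : Im (conjc x) = - Im x. Proof. by case: x. Qed.

Lemma csq_ge0 (z : C) : 0 <= csq z.
Proof. by rewrite /csq addr_ge0 // sqr_ge0. Qed.

Lemma csq0 : csq (0 : C) = 0.
Proof. by rewrite /csq /= expr0n /= addr0. Qed.

Lemma csqM (x y : C) : csq (x * y) = csq x * csq y.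
Proof. by case: x => ? ?; case: y => ? ?; rewrite /csq /=; ring. Qed.

Lemma csqD_le (x y : C) : csq (x + y) <= 2 * csq x + 2 * csq y.
Proof.
case: x => x1 x2; case: y => y1 y2; rewrite /csq /=.
have := sqr_ge0 (x1 - y1); have := sqr_ge0 (x2 - y2); rewrite !expr2; nra.
Qed.

Lemma mul_conj_scale (k x y : C) :
  k * x * conjc (k * y) = (csq k)%:C * (x * conjc y).
Proof.
case: k => k1 k2; case: x => x1 x2; case: y => y1 y2; rewrite /csq /=.
by apply/eqP; rewrite eq_complex /=; apply/andP; split; apply/eqP; ring.
Qed.

Definition cmeasurable (a : R) (f : R -> C) :=
  measurable_fun (itv0 a) (fun x => Re (f x)) /\
  measurable_fun (itv0 a) (fun x => Im (f x)).

Lemma L2_cmeasurable (a : R) (f : R -> C) : L2 a f -> cmeasurable a f.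
Proof. by case. Qed.

Lemma cmeasurable0 (a : R) : cmeasurable a (fun=> 0).
Proof. by split; exact: measurable_cst. Qed.

Lemma cmeasurable_lin (a : R) (k : C) (f g : R -> C) :
  cmeasurable a f -> cmeasurable a g ->
  cmeasurable a (fun x => k * f x + g x).
Proof.
move=> [mfr mfi] [mgr mgi]; split.
  under eq_fun do rewrite ReD ReM.
  by apply: measurable_funD => //; apply: measurable_funB; exact: measurable_funM.
under eq_fun do rewrite ImD ImM.
by apply: measurable_funD => //; apply: measurable_funD; exact: measurable_funM.
Qed.

Lemma cmeasurableB (a : R) (f g : R -> C) :
  cmeasurable a f -> cmeasurable a g ->
  cmeasurable a (fun x => f x - g x).
Proof.
move=> [mfr mfi] [mgr mgi]; split.
  by under eq_fun do rewrite ReB; exact: measurable_funB.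
by under eq_fun do rewrite ImB; exact: measurable_funB.
Qed.

Lemma cmeasurable_mul_conj (a : R) (f g : R -> C) :
  cmeasurable a f -> cmeasurable a g ->
  cmeasurable a (fun x => f x * conjc (g x)).
Proof.
move=> [mfr mfi] [mgr mgi]; split.
  under eq_fun do rewrite ReM Re_conj Im_conj.
  by apply: measurable_funB; apply: measurable_funM => //; exact: measurable_funN.
under eq_fun do rewrite ImM Re_conj Im_conj.
by apply: measurable_funD; apply: measurable_funM => //; exact: measurable_funN.
Qed.

Lemma measurable_csq (a : R) (f : R -> C) :
  cmeasurable a f -> measurable_fun (itv0 a) (fun x => csq (f x)).
Proof. by move=> [mr mi]; apply: measurable_funD; exact: measurable_funX. Qed.

Lemma cmeasurable_expo (a l : R) : cmeasurable a (expo l).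
Proof.
split; apply: measurable_funTS; apply: continuous_measurable_fun => x /=.
- apply: (@continuous_comp _ _ _ ( *%R (2 * pi * l)) cos).
  + exact: mulrl_continuous.
  + exact: continuous_cos.
- apply: (@continuous_comp _ _ _ ( *%R (2 * pi * l)) sin).
  + exact: mulrl_continuous.
  + exact: continuous_sin.
Qed.

Lemma L2_lin (a : R) (k : C) (f g : R -> C) :
  L2 a f -> L2 a g -> L2 a (fun x => k * f x + g x).
Proof.
move=> Lf Lg; have [mr mi] := cmeasurable_lin k (L2_cmeasurable Lf) (L2_cmeasurable Lg).
split => //; case: Lf => mfr mfi finf; case: Lg => mgr mgi fing.
have mD : measurable (itv0 a) by exact: measurable_itv.
have csqE_ge0 (z : C) : (0 <= (csq z)%:E)%E by rewrite lee_fin csq_ge0.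
have mcsqE (h : R -> C) : cmeasurable a h ->
    measurable_fun (itv0 a) (fun x => (csq (h x))%:E).
  by move=> mh; apply/measurable_EFinP; exact: measurable_csq.
have k2_ge0 : 0 <= 2 * csq k by rewrite mulr_ge0 ?csq_ge0.
apply: (@le_lt_trans _ _ (\int[mu]_(x in itv0 a)
    ((2 * csq k)%:E * (csq (f x))%:E + 2%:E * (csq (g x))%:E))%E).
  apply: ge0_le_integral => //; first exact: mcsqE.
  - by apply: emeasurable_funD; apply: measurable_funeM; exact: mcsqE.
  - move=> x _; rewrite -!EFinM -EFinD lee_fin.
    by rewrite (le_trans (csqD_le _ _)) // csqM mulrA.
rewrite ge0_integralD //; first last.
- by apply: measurable_funeM; exact: mcsqE.
- by move=> x _; rewrite mule_ge0.
- by apply: measurable_funeM; exact: mcsqE.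
- by move=> x _; rewrite mule_ge0.
rewrite !ge0_integralZl //; try exact: mcsqE.
by apply: lte_add_pinfty; exact: lte_mul_pinfty.
Qed.

Lemma lebesgue_measure_scale (c : R) (A : set R) : 0 < c -> measurable A ->
  mu A = (c%:E * mu (( *%R c) @^-1` A))%E.
Proof.
move=> c0 mA.
have mc : measurable_fun setT (( *%R c) : R -> measurableTypeR R).
  exact: mulrl_measurable.
apply: (@lebesgue_measure_unique R
  (mscale (NngNum (ltW c0)) (pushforward mu (( *%R c) : R -> measurableTypeR R)))) => //.
move=> X /ocitvP [->|[[x1 x2]/= x12 ->]]; first by rewrite !measure0.
transitivity (c%:E * mu (( *%R c) @^-1` `]x1, x2]%classic))%E; last by [].
have -> : ( *%R c) @^-1` `]x1, x2]%classic = `]x1 / c, x2 / c]%classic.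
  by apply/seteqP; split => x /=; rewrite !in_itv /=
    ltr_pdivrMr // ler_pdivlMr // ![_ * c]mulrC.
rewrite !lebesgue_measure_itv /= !lte_fin x12 ltr_pM2r ?invr_gt0 // x12.
by rewrite -!EFinD -EFinM; congr (_%:E); field; rewrite gt_eqF.
Qed.

Lemma measurable_fun_itv0_scale d (T : measurableType d) (a c : R) (h : R -> T) :
  0 < c ->
  measurable_fun (itv0 a) h -> measurable_fun (itv0 (c * a)) (fun x => h (x / c)).
Proof.
move=> c0 mh; apply: (measurable_comp (F := itv0 a)) => //.
- exact: measurable_itv.
- move=> _ [x /= + <-]; rewrite /itv0 /= !in_itv /= => /andP[x0 xa].
  by rewrite divr_ge0 ?(ltW c0) //= ler_pdivrMr // mulrC.
- exact: (@mulrr_measurable R _ c^-1).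
Qed.

Lemma ge0_integral_itv0_scale (a c : R) (f : R -> \bar R) : 0 < c ->
  measurable_fun (itv0 a) f -> (forall x : R, (0 <= f x)%E) ->
  (\int[mu]_(x in itv0 (c * a)) f (x / c)%R = c%:E * \int[mu]_(x in itv0 a) f x)%E.
Proof.
move=> c0 mf f0.
have mc : measurable_fun setT (( *%R c) : R -> measurableTypeR R).
  exact: mulrl_measurable.
rewrite (eq_measure_integral (mscale (NngNum (ltW c0))
    (pushforward mu (( *%R c) : R -> measurableTypeR R)))); last first.
  by move=> A mA _; exact: lebesgue_measure_scale.
rewrite ge0_integral_mscale //=;
  [|exact: measurable_itv|exact: measurable_fun_itv0_scale].
rewrite ge0_integral_pushforward //;
  [|exact: measurable_itv|exact: measurable_fun_itv0_scale].
congr (_ * _)%E.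
have -> : ( *%R c) @^-1` itv0 (c * a) = itv0 a.
  apply/seteqP; split => x /=; rewrite /itv0 /= !in_itv /=.
    by rewrite pmulr_rge0 // ler_pM2l.
  by move=> /andP[x0 xa]; rewrite mulr_ge0 ?(ltW c0) // ler_pM2l // xa.
by apply: eq_integral => x _ /=; rewrite mulrC mulKf // gt_eqF.
Qed.

Lemma fineZB (c : R) (x y : \bar R) : 0 <= c -> (0 <= x)%E -> (0 <= y)%E ->
  fine (c%:E * x - c%:E * y)%E = c * fine (x - y)%E.
Proof.
rewrite le_eqVlt => /orP[/eqP<-|c0]; first by rewrite !mul0e sube0 mul0r.
move: x y => [x| |] [y| |] //= _ _; first by rewrite mulrBr.
all: by rewrite mulry gtr0_sg // mul1e /= mulr0.
Qed.

Lemma Rintegral_itv0_scale (a c : R) (h : R -> R) : 0 < c ->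
  measurable_fun (itv0 a) h ->
  Rintegral mu (itv0 (c * a)) (fun x => h (x / c)) = c * Rintegral mu (itv0 a) h.
Proof.
move=> c0 mh; rewrite /Rintegral integralE [in RHS]integralE.
have -> : (fun x => (h (x / c))%:E) = (EFin \o h) \o (fun x => x / c) by [].
rewrite funepos_comp funeneg_comp.
have mEh : measurable_fun (itv0 a) (EFin \o h) by exact/measurable_EFinP.
rewrite (ge0_integral_itv0_scale c0 (measurable_funepos mEh)) ?funepos_ge0 //.
rewrite (ge0_integral_itv0_scale c0 (measurable_funeneg mEh)) ?funeneg_ge0 //.
rewrite fineZB ?(ltW c0) //; apply: integral_ge0 => x _.
- exact: funepos_ge0.
- exact: funeneg_ge0.
Qed.

(* No integrability is needed: scaling by [r >= 0] acts separately on the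
   positive and negative parts. *)
Lemma Rintegral_ge0Zl (D : set R) (r : R) (h : R -> R) : measurable D -> 0 <= r ->
  measurable_fun D h -> Rintegral mu D (fun x => r * h x) = r * Rintegral mu D h.
Proof.
move=> mD r0 mh; rewrite /Rintegral.
under eq_integral do rewrite EFinM.
rewrite integralE [in RHS]integralE ge0_funeposM // ge0_funenegM //.
have mEh : measurable_fun D (EFin \o h) by exact/measurable_EFinP.
rewrite ge0_integralZl //; try exact: measurable_funepos;
  try by move=> x _; exact: funepos_ge0.
rewrite ge0_integralZl //; try exact: measurable_funeneg;
  try by move=> x _; exact: funeneg_ge0.
rewrite fineZB //; apply: integral_ge0 => x _.
- exact: funepos_ge0.
- exact: funeneg_ge0.
Qed.

Definition dilate (k : C) (c : R) (f : R -> C) : R -> C := fun t => k * f (t / c).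

Lemma dilate_cancel (k1 k2 : C) (c1 c2 : R) (f : R -> C) :
  k1 * k2 = 1 -> c1 * c2 = 1 -> dilate k1 c1 (dilate k2 c2 f) = f.
Proof.
move=> k12 c12; apply: funext => t; rewrite /dilate mulrA k12 mul1r.
by rewrite -mulrA -invfM c12 invr1 mulr1.
Qed.

Lemma cmeasurable_dilate (a b c : R) (k : C) (f : R -> C) : 0 < c -> b = c * a ->
  cmeasurable a f -> cmeasurable b (dilate k c f).
Proof.
move=> c0 -> [mr mi]; rewrite /dilate; split.
  under eq_fun do rewrite ReM.
  by apply: measurable_funB; apply: measurable_funM => //;
    exact: (measurable_fun_itv0_scale (h := fun y => _ (f y))).
under eq_fun do rewrite ImM.
by apply: measurable_funD; apply: measurable_funM => //;
  exact: (measurable_fun_itv0_scale (h := fun y => _ (f y))).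
Qed.

Lemma normL2_dilate (a b c : R) (k : C) (f : R -> C) : 0 < c -> b = c * a ->
  cmeasurable a f -> normL2 b (dilate k c f) = Num.sqrt (csq k * c) * normL2 a f.
Proof.
move=> c0 -> mf; rewrite /normL2 /dilate.
have mcf := measurable_csq mf.
under eq_Rintegral do rewrite csqM.
rewrite Rintegral_ge0Zl ?csq_ge0 //; last 2 first.
- exact: measurable_itv.
- exact: (measurable_fun_itv0_scale (h := fun y => csq (f y))).
rewrite (Rintegral_itv0_scale (h := fun y => csq (f y))) //.
by rewrite mulrA sqrtrM // mulr_ge0 ?csq_ge0 ?(ltW c0).
Qed.

Lemma eqL2_dilate (a b c : R) (k : C) (f g : R -> C) : 0 < c -> b = c * a ->
  cmeasurable a f -> cmeasurable a g ->
  eqL2 a f g -> eqL2 b (dilate k c f) (dilate k c g).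
Proof.
move=> c0 bE mf mg; rewrite /eqL2 => fg0.
have -> : (fun x => dilate k c f x - dilate k c g x) = dilate k c (fun x => f x - g x).
  by apply: funext => x; rewrite /dilate mulrBr.
by rewrite (normL2_dilate _ c0 bE) ?fg0 ?mulr0 //; exact: cmeasurableB.
Qed.

Lemma L2_dilate (a b c : R) (k : C) (f : R -> C) : 0 < c -> b = c * a ->
  L2 a f -> L2 b (dilate k c f).
Proof.
move=> c0 bE Lf; have [mr mi] := cmeasurable_dilate k c0 bE (L2_cmeasurable Lf).
split => //; subst b; case: Lf => mfr mfi finf.
have mcf := measurable_csq (conj mfr mfi).
rewrite /dilate; under eq_integral do rewrite csqM EFinM.
rewrite ge0_integralZl //; last 4 first.
- exact: measurable_itv.
- apply/measurable_EFinP.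
  exact: (measurable_fun_itv0_scale (h := fun y => csq (f y))).
- by move=> x _; rewrite lee_fin csq_ge0.
- by rewrite lee_fin csq_ge0.
rewrite (ge0_integral_itv0_scale (f := fun y => (csq (f y))%:E)) //; last 2 first.
- exact/measurable_EFinP.
- by move=> x; rewrite lee_fin csq_ge0.
rewrite muleA -EFinM; apply: lte_mul_pinfty => //.
by rewrite lee_fin mulr_ge0 ?csq_ge0 ?(ltW c0).
Qed.

Lemma innerL2_dilate (a b c : R) (k : C) (f g : R -> C) : 0 < c -> b = c * a ->
  cmeasurable a f -> cmeasurable a g ->
  innerL2 b (dilate k c f) (dilate k c g) = (csq k * c)%:C * innerL2 a f g.
Proof.
move=> c0 -> mf mg; rewrite /innerL2 /dilate.
have [mr mi] := cmeasurable_mul_conj mf mg.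
under eq_Rintegral do rewrite mul_conj_scale Re_realM.
under [X in _ +i* X]eq_Rintegral do rewrite mul_conj_scale Im_realM.
rewrite !Rintegral_ge0Zl ?csq_ge0 //; first last.
- exact: (measurable_fun_itv0_scale (h := fun y => Re (f y * conjc (g y)))).
- exact: measurable_itv.
- exact: (measurable_fun_itv0_scale (h := fun y => Im (f y * conjc (g y)))).
- exact: measurable_itv.
rewrite (Rintegral_itv0_scale (h := fun y => Re (f y * conjc (g y)))) //.
rewrite (Rintegral_itv0_scale (h := fun y => Im (f y * conjc (g y)))) //.
by apply/eqP; rewrite eq_complex /= !mul0r subr0 addr0 !mulrA !eqxx.
Qed.

Definition dilate_conj (k1 k2 : C) (c : R) (T : (R -> C) -> R -> C) :
    (R -> C) -> R -> C :=
  fun f => dilate k1 c (T (dilate k2 c^-1 f)).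

Lemma bounded_linear_op_conj (a c : R) (k1 k2 : C) (T : (R -> C) -> R -> C) :
  0 < c -> bounded_linear_op a T -> bounded_linear_op (c * a) (dilate_conj k1 k2 c T).
Proof.
move=> c0 [TL Tlin [K TK]].
have cV0 : 0 < c^-1 by rewrite invr_gt0.
have aE : a = c^-1 * (c * a) by rewrite mulKf // gt_eqF.
have L2D f : L2 (c * a) f -> L2 a (dilate k2 c^-1 f).
  by move=> Lf; exact: L2_dilate cV0 aE Lf.
rewrite /dilate_conj; split.
- by move=> f Lf; apply: L2_dilate c0 erefl _; exact/TL/L2D.
- move=> z f g Lf Lg.
  have -> : dilate k2 c^-1 (fun x => z * f x + g x) =
      (fun x => z * dilate k2 c^-1 f x + dilate k2 c^-1 g x).
    by apply: funext => x; rewrite /dilate; ring.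
  have -> : (fun x => z * dilate k1 c (T (dilate k2 c^-1 f)) x +
                      dilate k1 c (T (dilate k2 c^-1 g)) x) =
      dilate k1 c (fun x => z * T (dilate k2 c^-1 f) x + T (dilate k2 c^-1 g) x).
    by apply: funext => x; rewrite /dilate; ring.
  apply: (eqL2_dilate _ c0 erefl) (Tlin _ _ _ (L2D _ Lf) (L2D _ Lg)).
  + by apply: L2_cmeasurable; apply: TL; apply: L2_lin; exact: L2D.
  + by apply: L2_cmeasurable; apply: L2_lin; apply: TL; exact: L2D.
- exists (Num.sqrt (csq k1 * c) * K * Num.sqrt (csq k2 * c^-1)) => f Lf.
  rewrite (normL2_dilate _ c0 erefl); last exact/L2_cmeasurable/TL/L2D.
  rewrite -!mulrA ler_wpM2l ?sqrtr_ge0 // (le_trans (TK _ (L2D _ Lf))) //.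
  by rewrite (normL2_dilate _ cV0 aE) ?mulrA //; exact: L2_cmeasurable.
Qed.

Lemma bounded_invertible_op_conj (a c : R) (k1 k2 : C) (T : (R -> C) -> R -> C) :
  0 < c -> k1 != 0 -> k2 != 0 -> bounded_invertible_op a T ->
  bounded_invertible_op (c * a) (dilate_conj k1 k2 c T).
Proof.
move=> c0 k10 k20 [BT [S [BS STE TSE]]].
have cV0 : 0 < c^-1 by rewrite invr_gt0.
have aE : a = c^-1 * (c * a) by rewrite mulKf // gt_eqF.
have [TL _ _] := BT; have [SL _ _] := BS.
have cn0 : c != 0 by rewrite gt_eqF.
split; first exact: bounded_linear_op_conj.
exists (dilate_conj k2^-1 k1^-1 c S); split; first exact: bounded_linear_op_conj.
- move=> f Lf; rewrite /dilate_conj (dilate_cancel _ (mulVf k10) (mulVf cn0)).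
  rewrite -{2}(dilate_cancel f (mulVf k20) (mulfV cn0)).
  have Lg := L2_dilate k2 cV0 aE Lf.
  apply: (eqL2_dilate _ c0 erefl) (STE _ Lg); apply: L2_cmeasurable => //.
  by apply: SL; exact: TL.
- move=> f Lf; rewrite /dilate_conj (dilate_cancel _ (mulfV k20) (mulVf cn0)).
  rewrite -{2}(dilate_cancel f (mulfV k10) (mulfV cn0)).
  have Lg := L2_dilate k1^-1 cV0 aE Lf.
  apply: (eqL2_dilate _ c0 erefl) (TSE _ Lg); apply: L2_cmeasurable => //.
  by apply: TL; exact: SL.
Qed.

Lemma orthonormal_basis_dilate (a c : R) (k : C) (I : Type) (u : I -> R -> C) :
  0 < c -> csq k * c = 1 -> orthonormal_basis a u ->
  orthonormal_basis (c * a) (fun i => dilate k c (u i)).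
Proof.
move=> c0 kc1 [uL uo uc].
have cV0 : 0 < c^-1 by rewrite invr_gt0.
have aE : a = c^-1 * (c * a) by rewrite mulKf // gt_eqF.
have k0 : k != 0.
  by apply: contra_eq_neq kc1 => ->; rewrite csq0 mul0r eq_sym oner_eq0.
have innerE f g : cmeasurable a f -> cmeasurable a g ->
    innerL2 (c * a) (dilate k c f) (dilate k c g) = innerL2 a f g.
  by move=> mf mg; rewrite (innerL2_dilate _ c0 erefl mf mg) kc1 mul1r.
split.
- by move=> i; exact: L2_dilate c0 erefl (uL i).
- by move=> i j; rewrite innerE ?uo //; exact: L2_cmeasurable.
- move=> f Lf fu0.
  pose g := dilate k^-1 c^-1 f.
  have Lg : L2 a g := L2_dilate k^-1 cV0 aE Lf.
  have fE : f = dilate k c g by rewrite dilate_cancel // mulfV // gt_eqF.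
  have g0 : eqL2 a g (fun=> 0).
    apply: (uc _ Lg) => i; have := fu0 i.
    by rewrite fE innerE //; exact: L2_cmeasurable.
  rewrite fE; have := eqL2_dilate k c0 erefl (L2_cmeasurable Lg) (cmeasurable0 a) g0.
  by congr eqL2; apply: funext => x; rewrite /dilate mulr0.
Qed.

(* [eqL2] carries no information on non-measurable functions, hence the
   measurability assumption on [v]. *)
Lemma riesz_basis_dilate (a c : R) (I : Type) (v : I -> R -> C) : 0 < c ->
  (forall i, cmeasurable a (v i)) ->
  riesz_basis a v -> riesz_basis (c * a) (fun i => dilate 1 c (v i)).
Proof.
move=> c0 mv [u [T [onb invT Tuv]]].
(* [k] makes [dilate k c] an isometry from L^2[0,a] onto L^2[0,ca]. *)
pose k : C := (Num.sqrt c)^-1%:C.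
have kc1 : csq k * c = 1.
  rewrite /csq /= expr0n /= addr0 exprVn sqr_sqrtr ?(ltW c0) //.
  by rewrite mulVf // gt_eqF.
have k0 : k != 0.
  by apply: contra_eq_neq kc1 => ->; rewrite csq0 mul0r eq_sym oner_eq0.
have [TL _ _] := invT.1.
exists (fun i => dilate k c (u i)), (dilate_conj 1 k^-1 c T); split.
- exact: orthonormal_basis_dilate.
- by apply: bounded_invertible_op_conj; rewrite ?invr_eq0 ?oner_eq0.
- move=> i; rewrite /dilate_conj (dilate_cancel _ (mulVf k0)) ?mulVf ?gt_eqF //.
  have [uL _ _] := onb.
  apply: (eqL2_dilate _ c0 erefl) (Tuv i) => //.
  by apply: L2_cmeasurable; apply: TL.
Qed.

Lemma riesz_basis_reindex (a : R) (I J : Type) (s : J -> I) (v : I -> R -> C) :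
  bijective s -> riesz_basis a v -> riesz_basis a (fun j => v (s j)).
Proof.
move=> [s' ss' s's] [u [T [[uL uo uc] invT Tuv]]].
exists (fun j => u (s j)), T; split => //; split => //.
- move=> i j; rewrite uo; congr (if _ then _ else _).
  by apply: asbool_equiv_eq; split => [/(can_inj ss')|->].
- move=> f Lf fu0; apply: (uc _ Lf) => i.
  by rewrite -(s's i); exact: fu0.
Qed.

Lemma riesz_basis_range (a : R) (I J : Type) (m : I -> J) (v : J -> R -> C) :
  injective m -> riesz_basis a (fun i => v (m i)) ->
  riesz_basis a (fun j : {j | range m j} => v (sval j)).
Proof.
move=> m_inj; pose s (j : {j | range m j}) := projT1 (cid2 (svalP j)).
have msE j : m (s j) = sval j by rewrite /s; case: cid2.
have -> : (fun j => v (sval j)) = (fun j => v (m (s j))).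
  by apply: funext => j; rewrite msE.
apply: riesz_basis_reindex.
exists (fun i => exist _ (m i) (imageT m i)) => [j|i].
- by case: j (msE j) => j jm jE; exact: eq_exist.
- by apply: m_inj; rewrite msE.
Qed.

Lemma dilate_expo (c l : R) : c != 0 -> dilate 1 c (expo (c * l)) = expo l.
Proof.
move=> c0; apply: funext => t; rewrite /dilate /expo mul1r.
by congr (_ +i* _); [congr cos|congr sin]; field.
Qed.
End Dilation.

Lemma dist_mul_floor_div (R : realType) (e x : R) : 0 < e ->
  `|e * (Num.floor (x / e))%:~R - x| < e.
Proof.
move=> e0; have /andP[le_floor lt_floor] := floor_itv (x / e).
rewrite intrD /= in lt_floor.
rewrite ler0_norm ?subr_le0; last by rewrite mulrC -ler_pdivlMr.
by rewrite opprB ltrBlDr addrC -[e in _ + e]mulr1 -mulrDr mulrC -ltr_pdivrMr.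
Qed.

Lemma floor_div_inj (R : realType) (e : R) : 0 < e <= 1 ->
  injective (fun n : int => Num.floor (n%:~R / e)).
Proof.
move=> /andP[e0 e1] n n' /= eq_floor.
have := floor_itv (n%:~R / e); have := floor_itv (n'%:~R / e).
rewrite -eq_floor intrD => /andP[le' lt'] /andP[le lt].
have lt_e : (n - n')%:~R < e :> R.
  by rewrite -[e in _ < e]mul1r -ltr_pdivrMr // intrB mulrBl; lra.
have gt_e : (n' - n)%:~R < e :> R.
  by rewrite -[e in _ < e]mul1r -ltr_pdivrMr // intrB mulrBl; lra.
have : (n - n' < 1)%R /\ (n' - n < 1)%R.
  by split; rewrite -(ltr_int R); apply: lt_le_trans e1.
by move=> [? ?]; lia.
Qed.

Local Close Scope complex_scope.

Theorem mainTheorem3 (R : realType) (eta : R) :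
  0 < eta < 1 ->
  (forall gamma : int -> R,
     (forall n : int, `|gamma n - n%:~R| < eta) ->
     riesz_basis 1 (fun n : int => expo (gamma n))) ->
  exists Lam : set int,
    riesz_basis eta (fun l : {z : int | Lam z} => expo ((sval l)%:~R : R)).
Proof.
move=> /andP[eta_gt0 eta_lt1] riesz_perturbed.
pose m (n : int) := Num.floor (n%:~R / eta).
have riesz1 : riesz_basis 1 (fun n => expo (eta * (m n)%:~R)).
  by apply: riesz_perturbed => n; exact: dist_mul_floor_div.
have := riesz_basis_dilate eta_gt0 (fun n => cmeasurable_expo _ _) riesz1.
under eq_fun do rewrite dilate_expo ?gt_eqF //.
rewrite mulr1 => riesz_eta; exists (range m).
apply: (riesz_basis_range (v := fun z : int => expo z%:~R)) riesz_eta.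
by apply: floor_div_inj; rewrite eta_gt0 ltW.
Qed.
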